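(* Let $X$ be a finite simplicial complex, $d\ge 0$, $K_d$ an anti-coloring of $X_d$, and $\Delta_{K_d}\subseteq C_d(X)$ the corresponding anti-synchrony subspace. Fix partitions $\mathcal{P}$ of $X_{d+1}$ and $\mathcal{Q}$ of $X_{d-1}$. Then: (1) $\Delta_{K_d}$ is invariant under $B_{d+1}FB_{d+1}^\intercal$ for all $F\in\mathcal{W}^{d+1}_{\mathcal P}$ if and only if $K_d$ is up-balanced with respect to $\mathcal{P}$; (2) $\Delta_{K_d}$ is invariant under $B_d^\intercal HB_d$ for all $H\in\mathcal{W}^{d-1}_{\mathcal Q}$ if and only if $K_d$ is down-balanced with respect to $\mathcal{Q}$.
   Context: A finite simplicial complex $X$ on vertex set $\{1,\dots,n\}$ is a collection of nonempty subsets closed under taking nonempty subsets; $X_d$ is the set of simplices with $d+1$ vertices; a $d$-simplex with vertices $i_0<\dots<i_d$ is written $[i_0,\dots,i_d]$. $C_d(X)$ is the real vector space with basis $X_d$ (coordinates $x_s$, $s\in X_d$) and inner product making $X_d$ orthonormal ($C_{-1}(X)=0$). The boundary map is $\partial_d[i_0,\dots,i_d]=\sum_{k=0}^d(-1)^k[i_0,\dots,\widehat{i_k},\dots,i_d]$ with matrix $B_d$. For $t\in X_{D}$, $e\in X_{D-1}$, $I^t_e\in\{0,1,-1\}$ is the coefficient of $e$ in $\partial_D t$ (so $I_e^t=(B_D)_{et}$). For a partition $\mathcal P=(P_1,\dots,P_k)$ of $X_D$, $\mathcal{W}^D_{\mathcal P}$ is the set of maps $F:C_D(X)\to C_D(X)$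 with $(F(x))_s=F_s(x_s)$ for odd functions $F_s:\mathbb{R}\to\mathbb{R}$ such that $F_s=F_t$ whenever $s,t$ lie in the same class $P_i$. Let $\mathcal K$ be a finite set of colors, $\mathbb{Z}\mathcal K$ the free $\mathbb{Z}$-module with basis $\mathcal K$, and $\mathbf B_{\mathcal K}=\{k,-k:k\in\mathcal K\}\cup\{0\}\subseteq\mathbb{Z}\mathcal K$. An anti-coloring of $X_d$ is a map $K_d:X_d\to\mathbf B_{\mathcal K}$. Its anti-synchrony space is $\Delta_{K_d}=\{x\in C_d(X): x_s=x_t \text{ if } K_d(s)=K_d(t),\ x_s=-x_t \text{ if } K_d(s)=-K_d(t)\}$ (so $x_s=0$ if $K_d(s)=0$). Induced colorings: $K_d^{\uparrow}:X_{d+1}\to\mathbb{Z}\mathcal K$, $K_d^{\uparrow}(t)=\sum_{e\in X_d}I^t_eK_d(e)$, and $K_d^{\downarrow}:X_{d-1}\to\mathbb{Z}\mathcal K$, $K_d^{\downarrow}(v)=\sum_{e\in X_d}I^e_vK_d(e)$. For a partition $\mathcal P=(P_1,\dots,P_k)$ of $X_{d+1}$, $e\in X_d$, a class $P_i$ and $a\in\mathbb{Z}\mathcal K$, put $U_i^a(e)=\sum_{t\in P_i,\,K^{\uparrow}_d(t)=a}I^t_e-\sum_{t\in P_i,\,K^{\uparrow}_d(t)=-a}I^t_e$. $K_d$ is up-balanced with respect to $\mathcal P$ if for all $e,f\in X_d$, all classes $P_i$ and all $a\in\mathbb{Z}\mathcal K$: $U_i^a(e)=U_i^a(f)$ whenever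 $K_d(e)=K_d(f)$, and $U_i^a(e)=-U_i^a(f)$ whenever $K_d(e)=-K_d(f)$. For a partition $\mathcal Q=(Q_1,\dots,Q_l)$ of $X_{d-1}$, put $D_j^a(e)=\sum_{v\in Q_j,\,K^{\downarrow}_d(v)=a}I^e_v-\sum_{v\in Q_j,\,K^{\downarrow}_d(v)=-a}I^e_v$. $K_d$ is down-balanced with respect to $\mathcal Q$ if for all $e,f\in X_d$, all classes $Q_j$ and all $a\in\mathbb{Z}\mathcal K$: $D_j^a(e)=D_j^a(f)$ whenever $K_d(e)=K_d(f)$, and $D_j^a(e)=-D_j^a(f)$ whenever $K_d(e)=-K_d(f)$. A subspace $W$ is invariant under a map $G$ if $G(W)\subseteq W$. *)

From HB Require Import structures.
From mathcomp Require Import all_boot all_order all_algebra.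
From mathcomp Require Import reals.
Set Implicit Arguments. Unset Strict Implicit. Unset Printing Implicit Defensive.
Import Order.TTheory GRing.Theory Num.Theory.
Local Open Scope ring_scope.

Section Defs.
Variable n : nat.
(* Vertex set {1,...,n} is modelled by 'I_n (same linear order). Simplices are
   finite sets of vertices. *)
Notation simplex := {set 'I_n}.

Definition is_complex (X : {set simplex}) : Prop :=
  (forall s : simplex, s \in X -> s != set0) /\
  (forall s t : simplex, s \in X -> t \subset s -> t != set0 -> t \in X).

(* simplices of X with exactly k vertices: X_d = simp X d.+1 *)
Definition simp (X : {set simplex}) (k : nat) : {set simplex} :=
  [set s in X | #|s| == k].

(* I^t_e : coefficient of e in boundary of t.  If t = [i_0,...,i_D] and
   e = t minus i_k then (-1)^k, where k = #{x in t | x < i_k}; 0 otherwise. *)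
Definition incid (t e : simplex) : int :=
  \sum_(v in t | e == t :\ v) (-1) ^+ #|[set x in t | (val x < val v)%N]|.

Definition ZK (K : finType) := {ffun K -> int}.
Definition gen (K : finType) (k : K) : ZK K := [ffun j => (j == k)%:Z].
Definition inBK (K : finType) (c : ZK K) : bool :=
  (c == 0) || [exists k, (c == gen k) || (c == - gen k)].

Variable K : finType.

Definition anti_coloring (X : {set simplex}) (d : nat) (Kd : simplex -> ZK K) : Prop :=
  forall s, s \in simp X d.+1 -> inBK (Kd s).

Variable R : realType.

(* vectors of C_d(X): functions supported on X_d; anti-synchrony space *)
Definition Delta (X : {set simplex}) (d : nat) (Kd : simplex -> ZK K)
    (x : simplex -> R) : Prop :=
  (forall s, s \notin simp X d.+1 -> x s = 0) /\
  (forall s t, s \in simp X d.+1 -> t \in simp X d.+1 ->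
     (Kd s = Kd t -> x s = x t) /\ (Kd s = - Kd t -> x s = - x t)).

Definition is_invariant (X : {set simplex}) (d : nat) (Kd : simplex -> ZK K)
    (G : (simplex -> R) -> (simplex -> R)) : Prop :=
  forall x, Delta X d Kd x -> Delta X d Kd (G x).

(* W^D_P with D+1 = k vertices: coordinatewise odd maps, constant on classes *)
Definition Wset (X : {set simplex}) (k : nat) (P : {set {set simplex}})
    (F : simplex -> R -> R) : Prop :=
  (forall s, s \in simp X k -> forall r, F s (- r) = - F s r) /\
  (forall Pi, Pi \in P -> forall s t, s \in Pi -> t \in Pi -> F s = F t).

Definition upmap (X : {set simplex}) (d : nat) (F : simplex -> R -> R)
    (x : simplex -> R) : simplex -> R := fun e =>
  if e \in simp X d.+1 then
    \sum_(t in simp X d.+2) (incid t e)%:~R *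
        F t (\sum_(e' in simp X d.+1) (incid t e')%:~R * x e')
  else 0.

Definition downmap (X : {set simplex}) (d : nat) (H : simplex -> R -> R)
    (x : simplex -> R) : simplex -> R := fun e =>
  if e \in simp X d.+1 then
    \sum_(v in simp X d) (incid e v)%:~R *
        H v (\sum_(e' in simp X d.+1) (incid e' v)%:~R * x e')
  else 0.

Definition up_col (X : {set simplex}) (d : nat) (Kd : simplex -> ZK K) (t : simplex) : ZK K :=
  \sum_(e in simp X d.+1) Kd e *~ incid t e.
Definition down_col (X : {set simplex}) (d : nat) (Kd : simplex -> ZK K) (v : simplex) : ZK K :=
  \sum_(e in simp X d.+1) Kd e *~ incid e v.

Definition Uia (X : {set simplex}) (d : nat) (Kd : simplex -> ZK K)
    (Pi : {set simplex}) (a : ZK K) (e : simplex) : int :=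
  \sum_(t in Pi | up_col X d Kd t == a) incid t e
  - \sum_(t in Pi | up_col X d Kd t == - a) incid t e.
Definition Dja (X : {set simplex}) (d : nat) (Kd : simplex -> ZK K)
    (Qj : {set simplex}) (a : ZK K) (e : simplex) : int :=
  \sum_(v in Qj | down_col X d Kd v == a) incid e v
  - \sum_(v in Qj | down_col X d Kd v == - a) incid e v.

Definition up_balanced (X : {set simplex}) (d : nat) (Kd : simplex -> ZK K)
    (P : {set {set simplex}}) : Prop :=
  forall e f, e \in simp X d.+1 -> f \in simp X d.+1 ->
  forall Pi, Pi \in P -> forall a : ZK K,
    (Kd e = Kd f -> Uia X d Kd Pi a e = Uia X d Kd Pi a f) /\
    (Kd e = - Kd f -> Uia X d Kd Pi a e = - Uia X d Kd Pi a f).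

Definition down_balanced (X : {set simplex}) (d : nat) (Kd : simplex -> ZK K)
    (Q : {set {set simplex}}) : Prop :=
  forall e f, e \in simp X d.+1 -> f \in simp X d.+1 ->
  forall Qj, Qj \in Q -> forall a : ZK K,
    (Kd e = Kd f -> Dja X d Kd Qj a e = Dja X d Kd Qj a f) /\
    (Kd e = - Kd f -> Dja X d Kd Qj a e = - Dja X d Kd Qj a f).
End Defs.

(* Both parts are instances of one statement about maps x |-> B F B^T x, where
   B is an integer incidence between d-simplices e and cells t (t in X_{d+1} with
   I^t_e for the up map, t in X_{d-1} with I^e_t for the down map).

   Under an anti-coloring, the anti-synchrony space consists exactly of the
   vectors x_e = phi_w (K_d e), where phi_w : Z K -> R is the additive map sending
   the color k to a weight w_k.  For such x the cell t receives phi_w of its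
   induced color, so, F being odd and constant on a class P_i, twice the
   contribution of P_i to the e-th output is sum_a U_i^a(e) F_i(phi_w a), a
   ranging over a set of colors closed under negation; balance gives invariance.
   Conversely, weights w_k = M^k with M large make phi_w injective on a, -a and
   the induced colors of P_i; testing with F equal to
   r |-> [r = phi_w a] - [r = - phi_w a] on P_i and to 0 elsewhere, the e-th
   output is exactly U_i^a(e), so invariance forces balance. *)

From HB Require Import structures.
From mathcomp Require Import all_boot all_order all_algebra.
From mathcomp Require Import reals zify.
Set Implicit Arguments. Unset Strict Implicit. Unset Printing Implicit Defensive.
Import Order.TTheory GRing.Theory Num.Theory.
Local Open Scope ring_scope.

Lemma radix_sum_eq0 (M : int) m (f : 'I_m -> int) :
  (forall i, `|f i| < M) -> \sum_(i < m) f i * M ^+ i = 0 -> forall i, f i = 0.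
Proof.
elim: m f => [|m IHm] f fltM; first by move=> _ [].
rewrite big_ord_recl expr0 mulr1.
under eq_bigr => i _ do rewrite exprS mulrCA.
rewrite -big_distrr /=; set S := \sum_(i < m) _ => f0S.
have S0 : S = 0.
  have M0 : 0 < M := le_lt_trans (normr_ge0 _) (fltM ord0).
  have /(congr1 Num.norm) : M * S = - f ord0 by apply/eqP; rewrite -addr_eq0 addrC f0S.
  rewrite normrN normrM gtr0_norm // => MS.
  have : `|S| < 1 by rewrite -(ltr_pM2l M0) mulr1 MS.
  lia.
have f0 : f ord0 = 0 by rewrite S0 mulr0 addr0 in f0S.
have flift0 := IHm (fun i => f (lift ord0 i)) (fun i => fltM _) S0.
by move=> i; case: (unliftP ord0 i) => [j ->|->].
Qed.

Section Weights.
Variables (K : finType) (R : numDomainType).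
Implicit Types (w : K -> R) (c : ZK K).

Definition weigh w c : R := \sum_k w k *~ c k.

Lemma weigh_is_zmod_morphism w : zmod_morphism (weigh w).
Proof.
by move=> c1 c2; rewrite /weigh -sumrB; apply: eq_bigr => k _; rewrite !ffunE mulrzBr.
Qed.

HB.instance Definition _ w :=
  GRing.isZmodMorphism.Build (ZK K) R (weigh w) (weigh_is_zmod_morphism w).

Lemma weigh_gen w k : weigh w (gen k) = w k.
Proof.
rewrite /weigh (bigD1 k) //= big1 => [|j jk]; first by rewrite ffunE eqxx addr0.
by rewrite ffunE (negbTE jk).
Qed.

Definition radix (M : int) (k : K) : R := (M ^+ enum_rank k)%:~R.

Lemma weigh_radix_eq0 (M : int) c : (forall k, `|c k| < M) -> weigh (radix M) c = 0 -> c = 0.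
Proof.
move=> cltM.
have -> : weigh (radix M) c = (\sum_(i < #|K|) c (enum_val i) * M ^+ i)%:~R.
  rewrite rmorph_sum (reindex enum_rank) /=; last first.
    by exists enum_val => i _; rewrite ?enum_rankK ?enum_valK.
  by apply: eq_bigr => k _; rewrite enum_rankK /radix intrM mulrzl.
move/eqP; rewrite intr_eq0 => /eqP /radix_sum_eq0 c0.
by apply/ffunP => k; rewrite ffunE -(enum_rankK k) c0.
Qed.

Lemma exists_injective_weigh (S : seq (ZK K)) :
  exists w, {in S &, injective (weigh w)}.
Proof.
pose A : int := \sum_(c <- S) \sum_k `|c k|.
have leA c k : c \in S -> `|c k| <= A.
  move=> cS; rewrite /A (big_rem c cS) (bigD1 k) //= -addrA lerDl.
  by rewrite addr_ge0 ?sumr_ge0 // => y _; rewrite sumr_ge0.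
exists (radix (1 + A + A)) => b c bS cS bc; apply/eqP; rewrite -subr_eq0; apply/eqP.
apply: (weigh_radix_eq0 (M := 1 + A + A)); last by rewrite raddfB /= bc subrr.
move=> k; rewrite !ffunE; apply: le_lt_trans (ler_normB _ _) _.
by rewrite -addrA ltr_pwDl // lerD ?leA.
Qed.

End Weights.

Section SignedCount.
Variables (I : finType) (V : zmodType) (R : numDomainType).
Variables (A : {pred I}) (c : I -> V).
Implicit Types (al be : I -> int) (h : V -> R).

Definition signed_count al (a : V) : int :=
  \sum_(t in A | c t == a) al t - \sum_(t in A | c t == - a) al t.

Lemma sum_group_by (G : I -> V -> R) (b : I -> V) (W : seq V) :
  uniq W -> (forall t, t \in A -> b t \in W) ->
  \sum_(a <- W) \sum_(t in A | b t == a) G t a = \sum_(t in A) G t (b t).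
Proof.
move=> uW bW; rewrite (exchange_big_dep (mem A)) /= => [|a t _ /andP[] //].
apply: eq_bigr => t tA; rewrite (eq_bigl (pred1 (b t))) => [|a]; last first.
  by rewrite tA eq_sym.
by rewrite -big_filter filter_pred1_uniq ?bW // big_seq1.
Qed.

Lemma odd_sum_signed_count al h (W : seq V) :
  {morph h : a / - a} -> uniq W ->
  (forall t, t \in A -> c t \in W) -> (forall t, t \in A -> - c t \in W) ->
  (\sum_(t in A) (al t)%:~R * h (c t)) *+ 2 =
  \sum_(a <- W) (signed_count al a)%:~R * h a.
Proof.
move=> hN uW cW NcW.
have NcE a : \sum_(t in A | c t == - a) al t = \sum_(t in A | - c t == a) al t.
  by apply: eq_bigl => t; rewrite eqr_oppLR.
under [RHS]eq_bigr => a _ do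
  rewrite /signed_count NcE rmorphB !rmorph_sum mulrBl !big_distrl.
rewrite sumrB !sum_group_by //=.
by under [X in _ - X]eq_bigr => t _ do rewrite hN mulrN; rewrite sumrN opprK mulr2n.
Qed.

Lemma odd_sum_scale al be h (s : int) :
  {morph h : a / - a} -> (forall a, signed_count al a = s * signed_count be a) ->
  \sum_(t in A) (al t)%:~R * h (c t) = s%:~R * \sum_(t in A) (be t)%:~R * h (c t).
Proof.
move=> hN alsbe.
pose W := undup ([seq c t | t in A] ++ [seq - c t | t in A]).
have cW t : t \in A -> c t \in W by move=> tA; rewrite mem_undup mem_cat image_f.
have NcW t : t \in A -> - c t \in W.
  by move=> tA; rewrite mem_undup mem_cat (image_f (fun t => - c t)) ?orbT.
apply: (pmulrnI (ltn0Sn 1)).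
rewrite -mulrnAr !(odd_sum_signed_count _ hN (undup_uniq _) cW NcW) big_distrr.
by apply: eq_bigr => a _; rewrite alsbe intrM /= mulrA.
Qed.

Definition odd_indicator (r0 r : R) : R := (r == r0)%:R - (r == - r0)%:R.

Lemma odd_indicatorN r0 : {morph odd_indicator r0 : r / - r}.
Proof. by move=> r; rewrite /odd_indicator eqr_oppLR eqr_opp opprB. Qed.

Lemma sum_odd_indicator al (phi : {additive V -> R}) a :
  {in [:: a, - a & [seq c t | t in A]] &, injective phi} ->
  \sum_(t in A) (al t)%:~R * odd_indicator (phi a) (phi (c t)) =
  (signed_count al a)%:~R.
Proof.
move=> phi_inj.
have phi_eq b t : b \in [:: a; - a] -> t \in A -> (phi (c t) == phi b) = (c t == b).
  move=> bA tA; apply/eqP/eqP => [|-> //]; apply: phi_inj.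
    by rewrite !inE image_f ?orbT.
  by move: bA; rewrite !inE => /orP[] ->; rewrite ?orbT.
rewrite /signed_count rmorphB !rmorph_sum /= !big_mkcondr -sumrB /=.
apply: eq_bigr => t tA; rewrite /odd_indicator -raddfN !phi_eq ?inE ?eqxx ?orbT // mulrBr.
by case: (c t == a); case: (c t == - a); rewrite /= ?mulr1 ?mulr0.
Qed.
End SignedCount.

Section AntiSynchrony.
Variables (R : realType) (n : nat) (X : {set {set 'I_n}}) (d : nat).
Variables (K : finType) (Kd : {set 'I_n} -> ZK K).
Local Notation E := (simp X d.+1).

Definition weigh_col (w : K -> R) e : R := if e \in E then weigh w (Kd e) else 0.

Lemma weigh_colE (w : K -> R) : {in E, forall e, weigh_col w e = weigh w (Kd e)}.
Proof. by rewrite /weigh_col => e ->. Qed.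

Lemma Delta_weigh_col (w : K -> R) : Delta X d Kd (weigh_col w).
Proof.
split=> [e /negbTE eE | e f eE fE]; first by rewrite /weigh_col eE.
rewrite !weigh_colE //.
by split=> ->; rewrite ?raddfN.
Qed.

Lemma Delta_weighP (x : {set 'I_n} -> R) : anti_coloring X d Kd -> Delta X d Kd x ->
  exists w : K -> R, {in E, forall e, x e = weigh w (Kd e)}.
Proof.
move=> antiK [_ xK].
pose w k := if [pick e in E | Kd e == gen k] is Some e then x e
  else if [pick e in E | Kd e == - gen k] is Some e then - x e else 0.
exists w => e eE.
have xKeq f : f \in E -> Kd e = Kd f -> x e = x f by move=> fE; case: (xK e f eE fE).
have xKopp f : f \in E -> Kd e = - Kd f -> x e = - x f by move=> fE; case: (xK e f eE fE).
have /orP[/eqP Ke | /existsP[k /orP[]/eqP Ke]] := antiK e eE;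
  rewrite Ke ?raddf0 ?raddfN /= ?weigh_gen /w.
- by apply/eqP; rewrite -eqNr eq_sym; apply/eqP/xKopp; rewrite ?Ke ?oppr0.
- case: pickP => [f /andP[fE /eqP Kf] | /(_ e)]; first by rewrite (xKeq f) ?Kf.
  by rewrite eE Ke eqxx.
- case: pickP => [f /andP[fE /eqP Kf] | _]; first by rewrite (xKopp f) ?Kf.
  case: pickP => [f /andP[fE /eqP Kf] | /(_ e)]; first by rewrite opprK (xKeq f) ?Kf.
  by rewrite eE Ke eqxx.
Qed.
End AntiSynchrony.

Section IncidenceMap.
Variables (R : realType) (n : nat) (X : {set {set 'I_n}}) (d k : nat).
Variables (K : finType) (Kd : {set 'I_n} -> ZK K).
(* [iota t e] is the incidence of the cell [t] of [simp X k] with the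
   d-simplex [e]: [incid t e] for the up map and [incid e t] for the down map. *)
Variables (iota : {set 'I_n} -> {set 'I_n} -> int) (P : {set {set {set 'I_n}}}).
Hypothesis partP : partition P (simp X k).
Local Notation E := (simp X d.+1).
Local Notation T := (simp X k).

Definition induced_col t : ZK K := \sum_(e in E) Kd e *~ iota t e.

Local Notation U Pi a e := (signed_count Pi induced_col (iota^~ e) a).

Definition incidence_map (F : {set 'I_n} -> R -> R) (x : {set 'I_n} -> R) e : R :=
  if e \in E then
    \sum_(t in T) (iota t e)%:~R * F t (\sum_(e' in E) (iota t e')%:~R * x e')
  else 0.

Definition balanced : Prop :=
  forall e f, e \in E -> f \in E -> forall Pi, Pi \in P -> forall a : ZK K,
    (Kd e = Kd f -> U Pi a e = U Pi a f) /\ (Kd e = - Kd f -> U Pi a e = - U Pi a f).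

Lemma incidence_sum_weigh (w : K -> R) x t : {in E, forall e, x e = weigh w (Kd e)} ->
  \sum_(e in E) (iota t e)%:~R * x e = weigh w (induced_col t).
Proof.
move=> xw; rewrite raddf_sum; apply: eq_bigr => e eE.
by rewrite xw // raddfMz /= mulrzl.
Qed.

Lemma incidence_map_scale F (w : K -> R) x e f (s : int) :
  Wset X k P F -> {in E, forall e, x e = weigh w (Kd e)} -> e \in E -> f \in E ->
  (forall Pi a, Pi \in P -> U Pi a e = s * U Pi a f) ->
  incidence_map F x e = s%:~R * incidence_map F x f.
Proof.
move=> [Fodd Fconst] xw eE fE ef_scale; rewrite /incidence_map eE fE.
under eq_bigr => t _ do rewrite (incidence_sum_weigh _ xw).
under [in RHS]eq_bigr => t _ do rewrite (incidence_sum_weigh _ xw).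
rewrite -(cover_partition partP) !big_trivIset ?(partition_trivIset partP) // big_distrr.
apply: eq_bigr => Pi PiP /=.
have /set0Pn[t0 t0Pi] := partition_neq0 partP PiP.
have t0T : t0 \in T := subsetP (partitionS partP PiP) t0 t0Pi.
under eq_bigr => t tPi do rewrite (Fconst Pi PiP t t0 tPi t0Pi).
under [in RHS]eq_bigr => t tPi do rewrite (Fconst Pi PiP t t0 tPi t0Pi).
apply: (odd_sum_scale (c := induced_col) (h := F t0 \o weigh w)) => [a | a].
  by rewrite /= raddfN /= Fodd.
exact: ef_scale.
Qed.

Definition class_indicator (Pi : {set {set 'I_n}}) (g : R -> R) t : R -> R :=
  if t \in Pi then g else fun=> 0.

Lemma Wset_class_indicator Pi g : Pi \in P -> {morph g : r / - r} ->
  Wset X k P (class_indicator Pi g).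
Proof.
move=> PiP gN; split=> [s _ r | Pj PjP s t sPj tPj]; rewrite /class_indicator.
  by case: ifP; rewrite ?gN ?oppr0.
have [<- | PjPi] := eqVneq Pj Pi; first by rewrite sPj tPj.
have PjPi_dis := trivIsetP (partition_trivIset partP) Pj Pi PjP PiP PjPi.
by rewrite (disjointFr PjPi_dis sPj) (disjointFr PjPi_dis tPj).
Qed.

Lemma incidence_map_class_indicator Pi (w : K -> R) a e :
  Pi \in P -> {in [:: a, - a & [seq induced_col t | t in Pi]] &, injective (weigh w)} ->
  e \in E ->
  incidence_map (class_indicator Pi (odd_indicator (weigh w a))) (weigh_col X d Kd w) e =
  (U Pi a e)%:~R.
Proof.
move=> PiP w_inj eE; rewrite /incidence_map eE.
under eq_bigr => t _ do rewrite (incidence_sum_weigh _ (weigh_colE Kd w)).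
rewrite /class_indicator (bigID [in Pi]) /= [X in _ + X]big1 ?addr0; last first.
  by move=> t /andP[_ /negbTE ->]; rewrite mulr0.
rewrite -(sum_odd_indicator (iota^~ e) w_inj); apply: eq_big => [t | t /andP[_ ->] //].
by rewrite andb_idl // => /(subsetP (partitionS partP PiP)).
Qed.

Lemma balanced_invariant F : anti_coloring X d Kd -> balanced -> Wset X k P F ->
  is_invariant X d Kd (incidence_map F).
Proof.
move=> antiK bal WF x xD; have [w xw] := Delta_weighP antiK xD.
split=> [e /negbTE eE | e f eE fE]; first by rewrite /incidence_map eE.
split=> Kef.
  rewrite (incidence_map_scale (s := 1) WF xw eE fE) ?mul1r // => Pi a PiP.
  by rewrite mul1r; apply: (bal e f eE fE Pi PiP a).1.
rewrite (incidence_map_scale (s := -1) WF xw eE fE) ?mulN1r // => Pi a PiP.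
by rewrite mulN1r; apply: (bal e f eE fE Pi PiP a).2.
Qed.

Lemma invariant_balanced :
  (forall F, Wset X k P F -> is_invariant X d Kd (incidence_map F)) -> balanced.
Proof.
move=> inv e f eE fE Pi PiP a.
have [w w_inj] := exists_injective_weigh R [:: a, - a & [seq induced_col t | t in Pi]].
have WF := Wset_class_indicator PiP (odd_indicatorN (weigh w a)).
have [_ /(_ e f eE fE)[Keq Kopp]] := inv _ WF _ (Delta_weigh_col X d Kd w).
rewrite !(incidence_map_class_indicator PiP w_inj) // in Keq Kopp.
by split=> Kef; apply: (@intr_inj R); rewrite ?intrN; [apply: Keq | apply: Kopp].
Qed.

Lemma invariant_iff_balanced : anti_coloring X d Kd ->
  (forall F, Wset X k P F -> is_invariant X d Kd (incidence_map F)) <-> balanced.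
Proof.
by move=> antiK; split=> [|bal F]; [apply: invariant_balanced | apply: balanced_invariant].
Qed.

End IncidenceMap.

Theorem mainTheorem4 (R : realType) (n : nat) (X : {set {set 'I_n}}) (d : nat)
  (K : finType) (Kd : {set 'I_n} -> ZK K)
  (P Q : {set {set {set 'I_n}}}) :
  is_complex X -> anti_coloring X d Kd ->
  partition P (simp X d.+2) -> partition Q (simp X d) ->
  ((forall F : {set 'I_n} -> R -> R, Wset X d.+2 P F ->
       is_invariant X d Kd (upmap X d F)) <-> up_balanced X d Kd P) /\
  ((forall H : {set 'I_n} -> R -> R, Wset X d Q H ->
       is_invariant X d Kd (downmap X d H)) <-> down_balanced X d Kd Q).
Proof.
move=> _ antiK partP partQ; split.
  exact: (invariant_iff_balanced R (fun t e => incid t e) partP antiK).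
exact: (invariant_iff_balanced R (fun v e => incid e v) partQ antiK).
Qed.
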